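(* Let $k\ge 3$ and let $\mathcal C_k=S(123,\,(k-1)(k-2)\cdots 21(k+1)k,\,k(k-1)\cdots 21(k+1))$. If $\pi\in\mathcal C_k\cap S_n$ with $n\ge1$ and $\pi_l=n$, then $l\le k$. Moreover, for every $n\ge 0$, $|\mathcal C_k\cap S_n|$ equals the number of nodes at level $n$ of the generating tree defined by the succession rule with axiom $(1)$ and productions $$(1)\rightsquigarrow(2),\qquad (h)\rightsquigarrow(2)(3)\cdots(h)(h+1)\ \ \text{for } 2\le h<k,\qquad (k)\rightsquigarrow(2)(3)\cdots(k-1)(k-1)(k).$$ *)

(* Permutations in one-line notation as sequences of nats. *)
From mathcomp Require Import all_boot.
Set Implicit Arguments. Unset Strict Implicit. Unset Printing Implicit Defensive.

Definition order_iso (s t : seq nat) : bool :=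
  (size s == size t) &&
  [forall i : 'I_(size s), forall j : 'I_(size s),
     (nth 0 s i < nth 0 s j) == (nth 0 t i < nth 0 t j)].

Definition contains (p sigma : seq nat) : bool :=
  [exists m : (size p).-tuple bool, order_iso (mask m p) sigma].

Definition avoids_all (pats : seq (seq nat)) (p : seq nat) : bool :=
  all (fun sigma => ~~ contains p sigma) pats.

Definition is_perm_n (n : nat) (p : seq nat) : bool := perm_eq p (iota 1 n).

Definition pat123 : seq nat := [:: 1; 2; 3].
Definition patA (k : nat) : seq nat := rev (iota 1 k.-1) ++ [:: k.+1; k].
Definition patB (k : nat) : seq nat := rev (iota 1 k) ++ [:: k.+1].

Definition C (k : nat) : seq (seq nat) := [:: pat123; patA k; patB k].

Definition inC (k : nat) (p : seq nat) : bool := avoids_all (C k) p.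

Definition countC (k n : nat) : nat := count (inC k) (permutations (iota 1 n)).

(* Succession rule: (1) ~> (2); (h) ~> (2)...(h+1) for 2 <= h < k;
   (k) ~> (2)(3)...(k-1)(k-1)(k). Other labels never occur. *)
Definition children (k h : nat) : seq nat :=
  if h == 1 then [:: 2]
  else if h < k then iota 2 h
  else if h == k then iota 2 (k - 2) ++ [:: k.-1; k]
  else [::].

Fixpoint level (k n : nat) : seq nat :=
  match n with
  | 0 => [:: 1]
  | n'.+1 => flatten (map (children k) (level k n'))
  end.

Definition tree_count (k n : nat) : nat := size (level k n).

From mathcomp Require Import all_boot zify.
Set Implicit Arguments. Unset Strict Implicit. Unset Printing Implicit Defensive.

(* Every p in C_k of size n+1 arises in exactly one way by inserting the
   maximum n+1 into s = rem (n+1) p, which lies in C_k, at position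
   j = index (n+1) p.  Avoiding 123 forces the prefix of s before j to be
   decreasing, avoiding k...21(k+1) forces j < k, and avoiding
   (k-1)...21(k+1)k forbids j = k-1 unless s starts with n; conversely such
   an insertion creates no forbidden pattern, because a new occurrence must
   use n+1 as its maximum.  So the admissible positions are 0, ..., h-1 for a
   number h determined by the initial decreasing run of s and its first
   entry, the values of h on the children of s are exactly the productions
   of the succession rule, and the multiset of labels of C_k at size n is the
   n-th level of the generating tree. *)

(** * Pattern containment and order isomorphism *)

Lemma order_isoP s t :
  reflect (size s = size t /\ forall i j, i < size s -> j < size s ->
             (nth 0 s i < nth 0 s j) = (nth 0 t i < nth 0 t j))
          (order_iso s t).
Proof.
apply: (iffP andP) => [[/eqP st /forallP iso]|[st iso]].
  split=> // i j ilt jlt.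
  by have /forallP /(_ (Ordinal jlt)) /eqP := iso (Ordinal ilt).
split; first by rewrite st.
by apply/forallP => i; apply/forallP => j; apply/eqP/iso.
Qed.

Lemma containsP p sigma :
  reflect (exists2 q, subseq q p & order_iso q sigma) (contains p sigma).
Proof.
apply: (iffP existsP) => [[m iso]|[q /subseqP [m sz ->] iso]].
  by exists (mask m p); first exact: mask_subseq.
have szm : size m == size p by rewrite sz.
by exists (Tuple szm).
Qed.

Lemma avoids_all_subseq pats p p' :
  subseq p p' -> avoids_all pats p' -> avoids_all pats p.
Proof.
move=> pp' /allP av; apply/allP => sigma /av; apply: contra.
by case/containsP => q qp iso; apply/containsP; exists q => //; apply: subseq_trans pp'.
Qed.

Lemma avoids_all_nil pats : [::] \notin pats -> avoids_all pats [::].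
Proof.
move=> pats_nonempty; apply/allP => sigma sigma_pat; apply/containsP => -[q].
rewrite subseq0 => /eqP -> /order_isoP [/esym/size0nil sigma0 _].
by rewrite -sigma0 sigma_pat in pats_nonempty.
Qed.

Lemma ltn_nth_sorted_ltn s i j : sorted ltn s -> i < size s -> j < size s ->
  (nth 0 s i < nth 0 s j) = (i < j).
Proof.
move=> ss ilt jlt; case: (ltngtP i j) => [ij|ji|->]; last by rewrite ltnn.
- exact: (sorted_ltn_nth ltn_trans).
- by rewrite ltnNge ltnW //; apply: (sorted_ltn_nth ltn_trans).
Qed.

Lemma ltn_nth_sorted_gtn s i j : sorted gtn s -> i < size s -> j < size s ->
  (nth 0 s i < nth 0 s j) = (j < i).
Proof.
move=> ss ilt jlt; case: (ltngtP i j) => [ij|ji|->]; last by rewrite ltnn.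
- by rewrite ltnNge ltnW //; apply: (sorted_ltn_nth (rev_trans ltn_trans)).
- exact: (sorted_ltn_nth (rev_trans ltn_trans)).
Qed.

Lemma order_iso_sorted_ltn s t :
  sorted ltn s -> sorted ltn t -> size s = size t -> order_iso s t.
Proof.
move=> ss st sz; apply/order_isoP; split=> // i j ilt jlt.
by rewrite !ltn_nth_sorted_ltn // -sz.
Qed.

Lemma order_iso_sorted_gtn s t :
  sorted gtn s -> sorted gtn t -> size s = size t -> order_iso s t.
Proof.
move=> ss st sz; apply/order_isoP; split=> // i j ilt jlt.
by rewrite !ltn_nth_sorted_gtn // -sz.
Qed.

Lemma order_iso_cat a b c e : order_iso a c -> order_iso b e ->
  allrel ltn a b -> allrel ltn c e -> order_iso (a ++ b) (c ++ e).
Proof.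
move=> /order_isoP [ac iso_ac] /order_isoP [be iso_be] /allrelP ab /allrelP ce.
have {}ab x y : x \in a -> y \in b -> x < y by exact: ab.
have {}ce x y : x \in c -> y \in e -> x < y by exact: ce.
apply/order_isoP; split=> [|i j]; first by rewrite !size_cat ac be.
rewrite size_cat !nth_cat -ac => ilt jlt.
case: (ltnP i (size a)) => ia; case: (ltnP j (size a)) => ja.
- exact: iso_ac.
- by rewrite ab ?ce ?mem_nth -?ac -?be // ltn_subLR.
- have ab' : nth 0 a j < nth 0 b (i - size a) by rewrite ab ?mem_nth // ltn_subLR.
  have ce' : nth 0 c j < nth 0 e (i - size a).
    by rewrite ce ?mem_nth -?ac -?be // ltn_subLR.
  by rewrite ltnNge ltnW // ltnNge ltnW.
- by apply: iso_be; rewrite ltn_subLR.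
Qed.

Lemma nth_cat_cons_neq (a b : seq nat) x i : i < size (a ++ x :: b) -> i != size a ->
  nth 0 (a ++ x :: b) i \in a ++ b.
Proof.
rewrite size_cat /= nth_cat mem_cat => ilt.
case: ltngtP => [/mem_nth -> // | ai _ | -> //]; rewrite orbC.
by rewrite -(subnSK ai) /= mem_nth // ltn_subLR // addSn -addnS.
Qed.

Lemma order_iso_max_index (a b c e : seq nat) x y :
  order_iso (a ++ x :: b) (c ++ y :: e) ->
  all (gtn x) (a ++ b) -> all (gtn y) (c ++ e) -> size a = size c.
Proof.
move=> /order_isoP [sz iso] /allP xmax /allP ymax.
apply/eqP/negPn/negP => ac.
have ia : size a < size (a ++ x :: b) by rewrite size_cat /= addnS ltnS leq_addr.
have ic : size c < size (a ++ x :: b) by rewrite sz size_cat /= addnS ltnS leq_addr.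
have lt_x : nth 0 (a ++ x :: b) (size c) < x.
  by apply: xmax; apply: nth_cat_cons_neq; rewrite // eq_sym.
have lt_y : nth 0 (c ++ y :: e) (size a) < y.
  by apply: ymax; apply: nth_cat_cons_neq; rewrite -?sz.
have := iso _ _ ic ia.
rewrite [nth _ (a ++ _) (size a)]nth_cat [nth _ (c ++ _) (size c)]nth_cat.
by rewrite !ltnn !subnn /= lt_x ltnNge ltnW.
Qed.

(** * Decreasing sequences *)

Lemma sorted_gtn_head s z : sorted gtn s -> z \in s -> z <= head 0 s.
Proof.
case: s => [|x s] //= s_dec; rewrite inE => /predU1P [-> //|zs].
by apply/ltnW; have /allP := order_path_min (rev_trans ltn_trans) s_dec; apply.
Qed.

Lemma not_sorted_gtn_ascent s : uniq s -> ~~ sorted gtn s ->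
  exists a b, a < b /\ subseq [:: a; b] s.
Proof.
elim: s => [|x [|y s] IH] //= /andP [xys ys_uniq].
case: (ltngtP x y) => [xy _|yx /= ys_dec|xy]; last by rewrite xy mem_head in xys.
- by exists x, y; rewrite /= !eqxx sub0seq.
- have [a [b [ab abs]]] := IH ys_uniq ys_dec.
  by exists a, b; split=> //; apply: subseq_trans abs (subseq_cons _ _).
Qed.

Lemma iota_rcons m n : iota m n.+1 = rcons (iota m n) (m + n).
Proof. by rewrite -addn1 iotaD cats1. Qed.

Lemma map_succ_iota m n : map succn (iota m n) = iota m.+1 n.
Proof. by rewrite -add1n iotaDl. Qed.

Lemma sorted_gtn_rev_iota m : sorted gtn (rev (iota 1 m)).
Proof. by rewrite rev_sorted; apply: iota_ltn_sorted. Qed.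

Lemma all_gtn_rev_iota m : all (gtn m.+1) (rev (iota 1 m)).
Proof. by apply/allP => z; rewrite mem_rev mem_iota /= add1n ltnS => /andP []. Qed.

Lemma allrel_ltn_rev_iota m ys : all (ltn m) ys -> allrel ltn (rev (iota 1 m)) ys.
Proof.
move=> /allP m_lt; apply/allrelP => x y; rewrite mem_rev mem_iota => /andP [_ xm].
by move=> /m_lt /= my; apply: leq_ltn_trans my; rewrite -ltnS -add1n.
Qed.

Fixpoint desc_run (s : seq nat) : nat :=
  if s is x :: s' then
    if s' is y :: _ then (if y < x then (desc_run s').+1 else 1) else 1
  else 0.

Lemma desc_run_le_size s : desc_run s <= size s.
Proof. by elim: s => [|x [|y s] IH] //=; case: ifP. Qed.

Lemma sorted_take_desc_run s j : j <= size s ->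
  sorted gtn (take j s) = (j <= desc_run s).
Proof.
elim: s j => [|x [|y s] IH] [|j] //= js.
have {IH} := IH j js; case: j js => [|j] js /=; first by case: ifP.
by move=> ->; case: ifP.
Qed.

Lemma desc_run_cons x s : all (gtn x) s -> desc_run (x :: s) = (desc_run s).+1.
Proof. by case: s => [|y s] //= /andP [-> _]. Qed.

(** * Insertion *)

Section Insertion.
Variables (T : eqType) (x : T).
Implicit Types (s q : seq T).

Definition insert_at j s := take j s ++ x :: drop j s.

Lemma perm_insert_at j s : perm_eq (insert_at j s) (x :: s).
Proof. by rewrite /insert_at -cat1s perm_catCA cat_take_drop. Qed.

Lemma subseq_insert_at j s : subseq s (insert_at j s).
Proof.
rewrite -{1}(cat_take_drop j s) /insert_at.
by apply: cat_subseq => //; apply: subseq_cons.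
Qed.

Lemma index_insert_at j s : x \notin s -> j <= size s -> index x (insert_at j s) = j.
Proof.
move=> xs js; rewrite /insert_at index_cat /= eqxx addn0 size_takel //.
by rewrite (negbTE (contra (@mem_take _ _ _ _) xs)).
Qed.

Lemma rem_insert_at j s : x \notin s -> rem x (insert_at j s) = s.
Proof.
elim: s j => [|y s IH] [|j] //=; rewrite ?eqxx // inE negb_or => /andP [xy xs].
by rewrite /insert_at /= in IH *; rewrite eq_sym (negbTE xy) IH.
Qed.

Lemma insert_at_index_rem s : x \in s -> insert_at (index x s) (rem x s) = s.
Proof.
rewrite /insert_at; elim: s => [|y s IH] //=; rewrite inE eq_sym.
by case: eqP => [-> _|_ /= /IH ->]; rewrite ?take0 ?drop0.
Qed.

Lemma insert_at_inj j1 j2 s1 s2 : x \notin s1 -> x \notin s2 ->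
  j1 <= size s1 -> j2 <= size s2 -> insert_at j1 s1 = insert_at j2 s2 ->
  s1 = s2 /\ j1 = j2.
Proof.
move=> xs1 xs2 js1 js2 eq12; split.
  by rewrite -(rem_insert_at j1 xs1) eq12 rem_insert_at.
by rewrite -(index_insert_at xs1 js1) eq12 index_insert_at.
Qed.

Lemma subseq_insert_atP j s q : uniq (x :: s) -> subseq q (insert_at j s) ->
  subseq q s \/
  exists q1 q2, [/\ q = q1 ++ x :: q2, subseq q1 (take j s) & subseq q2 (drop j s)].
Proof.
move=> xs_uniq qs; case: (boolP (x \in q)) => [xq | xq]; last first.
  have /andP [xs _] := xs_uniq.
  by left; rewrite -(rem_id xq) -(rem_insert_at j xs); apply: subseq_rem.
have ins_uniq : uniq (insert_at j s) by rewrite (perm_uniq (perm_insert_at j s)).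
right; case/splitPr: xq qs => q1 q2; rewrite uniq_subseq_pivot // => /andP [q1s q2s].
by exists q1, q2.
Qed.
End Insertion.

Lemma contains_insert_atP x j s sigma : uniq (x :: s) ->
  contains (insert_at x j s) sigma -> contains s sigma \/
  exists q1 q2, [/\ subseq q1 (take j s), subseq q2 (drop j s)
                  & order_iso (q1 ++ x :: q2) sigma].
Proof.
move=> xs_uniq /containsP [q qs iso].
case: (subseq_insert_atP xs_uniq qs) => [q_s | [q1 [q2 [q_eq q1s q2s]]]].
  by left; apply/containsP; exists q.
by right; exists q1, q2; rewrite -q_eq.
Qed.

Lemma desc_run_insert_at j x s : 0 < j <= desc_run s -> all (gtn x) s ->
  desc_run (insert_at x j s) = j.
Proof.
move=> /andP [j_gt0 j_run] /allP x_max.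
have js : j <= size s := leq_trans j_run (desc_run_le_size s).
have sz : size (insert_at x j s) = (size s).+1.
  by rewrite (perm_size (perm_insert_at x j s)).
apply/eqP; rewrite eqn_leq -ltnS; apply/andP; split.
- have take_succ : take j.+1 (insert_at x j s) = rcons (take j s) x.
    by rewrite /insert_at take_cat size_takel // ltnNge leqnSn /= subSnn /= take0 cats1.
  rewrite ltnNge -sorted_take_desc_run ?sz // take_succ.
  case E: (take j s) => [|y t]; first by move: j_gt0; rewrite -(size_takel js) E.
  have last_lt : last y t < x by apply: x_max; rewrite (mem_take (n0 := j)) // E mem_last.
  by rewrite /= rcons_path /= [x < _]ltnNge ltnW ?andbF.
- rewrite -sorted_take_desc_run ?sz ?(leq_trans js) //.
  by rewrite /insert_at take_size_cat ?size_takel // sorted_take_desc_run.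
Qed.

Lemma is_perm_n_size n s : is_perm_n n s -> size s = n.
Proof. by move/perm_size; rewrite size_iota. Qed.

Lemma is_perm_n_uniq n s : is_perm_n n s -> uniq s.
Proof. by move/perm_uniq ->; apply: iota_uniq. Qed.

Lemma mem_is_perm_n n s z : is_perm_n n s -> (z \in s) = (0 < z <= n).
Proof. by move/perm_mem ->; rewrite mem_iota add1n ltnS. Qed.

Lemma max_is_perm_n n p : is_perm_n n.+1 p -> n.+1 \in p.
Proof. by move/mem_is_perm_n ->; rewrite leqnn. Qed.

Lemma index_max_is_perm_n n p : is_perm_n n.+1 p -> index n.+1 p <= n.
Proof.
move=> p_perm; have := index_mem n.+1 p.
by rewrite max_is_perm_n // (is_perm_n_size p_perm) ltnS => ->.
Qed.

Lemma perm_iota_succ n : perm_eq (iota 1 n.+1) (n.+1 :: iota 1 n).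
Proof. by rewrite iota_rcons add1n perm_rcons perm_refl. Qed.

Lemma is_perm_n_insert_at n j s : is_perm_n n s -> is_perm_n n.+1 (insert_at n.+1 j s).
Proof.
move=> s_perm; rewrite /is_perm_n (perm_trans (perm_insert_at _ _ _)) //.
by rewrite perm_sym (permPl (perm_iota_succ n)) perm_cons perm_sym.
Qed.

Lemma is_perm_n_rem n p : is_perm_n n.+1 p -> is_perm_n n (rem n.+1 p).
Proof.
move=> p_perm; rewrite /is_perm_n -(perm_cons n.+1) -(permPr (perm_iota_succ n)).
by rewrite -(permPr p_perm) perm_sym perm_to_rem ?max_is_perm_n.
Qed.

(** * Inserting a new maximum into C_k *)

Lemma patA_max k : all (gtn k.+1) (rev (iota 1 k.-1) ++ [:: k]).
Proof.
rewrite all_cat /= ltnSn !andbT; apply/allP => z /(allP (all_gtn_rev_iota k.-1)) /=.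
by move/leq_trans; apply; rewrite ltnS leq_pred.
Qed.

Lemma patA_lt k : 1 < k -> nth 0 (patA k) 0 < nth 0 (patA k) k.
Proof.
case: k => [|[|m]] // _; rewrite /patA succnK iota_rcons add1n rev_rcons /=.
by rewrite nth_cat size_rev size_iota [m.+1 < m]ltnNge leqnSn subSnn.
Qed.

Lemma order_iso_patA_head k (q1 : seq nat) x z : 1 < k ->
  order_iso (q1 ++ [:: x; z]) (patA k) -> head 0 q1 < z.
Proof.
case: k => [|[|m]] // _ /order_isoP [sz iso].
have q1_size : size q1 = m.+1.
  by move: sz; rewrite /patA !size_cat size_rev size_iota /= !addn2 => -[].
have := iso 0 m.+2; rewrite patA_lt // !nth_cat q1_size size_cat q1_size /=.
rewrite addn2 ltnSn [m.+2 < m.+1]ltnNge leqnSn subSnn nth0 /=.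
by move=> /(_ isT isT) ->.
Qed.

Definition active_site k s j :=
  sorted gtn (take j s) && ((j < k.-1) || (j == k.-1) && (head 0 s == size s)).

(* [label k s] is the label of [s] in the generating tree: the number of
   positions at which a new maximum can be inserted without leaving C_k. *)
Definition label k s :=
  if desc_run s < k.-1 then (desc_run s).+1
  else if head 0 s == size s then k else k.-1.

Lemma active_siteE k s j : 1 < k -> j <= size s ->
  active_site k s j = (j < label k s).
Proof.
move=> k_gt1 js; rewrite /active_site sorted_take_desc_run // /label.
case: (ltnP (desc_run s) k.-1) => run_k; case: (head 0 s =P size s) => _;
  rewrite ?andbT ?andbF ?orbF; apply/idP/idP; lia.
Qed.

Lemma label_le k s : label k s <= k.
Proof. by rewrite /label; case: ifP => run_k; [|case: ifP => _]; lia. Qed.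

Lemma label_le_desc_run k s : label k s <= (desc_run s).+1.
Proof. by rewrite /label; case: ifP => run_k; [|case: ifP => _]; lia. Qed.

Lemma label_le_succ_size k s : label k s <= (size s).+1.
Proof. by rewrite (leq_trans (label_le_desc_run k s)) // ltnS desc_run_le_size. Qed.

Lemma label_gt0 k s : 1 < k -> 0 < label k s.
Proof. by move=> k_gt1; rewrite /label; case: ifP => run_k; [|case: ifP => _]; lia. Qed.

Section InsertMax.
Variables (k n : nat) (s : seq nat).
Hypotheses (k_gt2 : 2 < k) (s_perm : is_perm_n n s).

Let k_pred_gt0 : 0 < k.-1.
Proof. by case: k k_gt2 => [|[|[|]]]. Qed.

Let s_size : size s = n := is_perm_n_size s_perm.

Let s_uniq : uniq s := is_perm_n_uniq s_perm.

Let s_le z : z \in s -> z <= n.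
Proof. by rewrite (mem_is_perm_n _ s_perm) => /andP []. Qed.

Let s_lt_succ : all (gtn n.+1) s.
Proof. by apply/allP => z /s_le. Qed.

Let succ_s_uniq : uniq (n.+1 :: s).
Proof. by rewrite /= s_uniq andbT; apply/negP => /s_le; rewrite ltnn. Qed.

Lemma prefix_sorted_of_insert_avoid123 j :
  ~~ contains (insert_at n.+1 j s) pat123 -> sorted gtn (take j s).
Proof.
apply: contraNT => /(not_sorted_gtn_ascent (take_uniq j s_uniq)) [a [b [ab abs]]].
have b_le : b <= n.
  apply: s_le; apply: (mem_take (n0 := j)); apply: (mem_subseq abs).
  by rewrite !inE eqxx orbT.
apply/containsP; exists [:: a; b; n.+1].
  by apply: (@cat_subseq _ [:: a; b] [:: n.+1]); rewrite // sub1seq mem_head.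
by apply: order_iso_sorted_ltn => //=; rewrite ab ltnS b_le.
Qed.

Lemma site_lt_of_insert_avoidB j : j <= n -> sorted gtn (take j s) ->
  ~~ contains (insert_at n.+1 j s) (patB k) -> j < k.
Proof.
move=> jn prefix_dec; apply: contraNT; rewrite -leqNgt => kj.
have k_size : size (take k s) = k by rewrite size_takel // s_size (leq_trans kj).
apply/containsP; exists (take k s ++ [:: n.+1]).
  rewrite /insert_at -(take_takel s kj).
  by apply: cat_subseq; [apply: take_subseq | apply: prefix_subseq].
apply: order_iso_cat.
- apply: order_iso_sorted_gtn _ (sorted_gtn_rev_iota k) _.
    by rewrite -(take_takel s kj) take_sorted.
  by rewrite size_rev size_iota.
- exact: order_iso_sorted_gtn.
- by rewrite allrel1r; apply/allP => z /mem_take /s_le.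
- by rewrite allrel_ltn_rev_iota //= andbT.
Qed.

Lemma head_of_insert_avoidA : k.-1 <= n -> sorted gtn (take k.-1 s) ->
  ~~ contains (insert_at n.+1 k.-1 s) (patA k) -> head 0 s = n.
Proof.
move=> kn prefix_dec; apply: contraNeq => head_ne.
have n_gt0 : 0 < n := leq_trans k_pred_gt0 kn.
have head_lt : head 0 s < n.
  by rewrite ltn_neqAle head_ne s_le // -nth0 mem_nth // s_size.
have prefix_lt : allrel ltn (take k.-1 s) [:: n.+1; n].
  apply/allrelP => z y.
  move=> /(sorted_gtn_head prefix_dec); rewrite -nth0 nth_take // nth0 => z_le.
  rewrite !inE => /orP [] /eqP -> /=; last exact: leq_ltn_trans z_le head_lt.
  by rewrite ltnS (leq_trans z_le) // ltnW.
have n_suffix : n \in drop k.-1 s.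
  have : n \in s by rewrite (mem_is_perm_n _ s_perm) n_gt0 leqnn.
  rewrite -{1}(cat_take_drop k.-1 s) mem_cat => /orP [n_prefix | //].
  move/allrelP: prefix_lt => /(_ n n n_prefix).
  by rewrite !inE eqxx orbT /= ltnn => /(_ isT).
apply/containsP; exists (take k.-1 s ++ [:: n.+1; n]).
  by rewrite /insert_at; apply: cat_subseq => //=; rewrite eqxx sub1seq.
apply: order_iso_cat => //.
- apply: order_iso_sorted_gtn prefix_dec (sorted_gtn_rev_iota _) _.
  by rewrite size_rev size_iota size_takel ?s_size.
- by apply: order_iso_sorted_gtn; rewrite /= ?leqnn.
- by rewrite allrel_ltn_rev_iota //= ltn_predL ltnS leq_pred (leq_trans _ k_gt2).
Qed.

Lemma active_site_of_insert j : j <= n ->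
  inC k (insert_at n.+1 j s) -> active_site k s j.
Proof.
move=> jn; rewrite /inC /avoids_all /= andbT => /and3P [no123 noA noB].
have prefix_dec := prefix_sorted_of_insert_avoid123 no123.
rewrite /active_site prefix_dec s_size /=.
have j_lt := site_lt_of_insert_avoidB jn prefix_dec noB.
case: (ltngtP j k.-1) => [// | k_lt | j_eq] /=.
  by move: j_lt; rewrite -(ltn_predK k_gt2) ltnS leqNgt k_lt.
by rewrite head_of_insert_avoidA -?j_eq ?eqxx.
Qed.

Lemma contains_insert_max j sigma : ~~ contains s sigma ->
  contains (insert_at n.+1 j s) sigma ->
  exists q1 q2, [/\ subseq q1 (take j s), subseq q2 (drop j s),
                   order_iso (q1 ++ n.+1 :: q2) sigma & all (gtn n.+1) (q1 ++ q2)].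
Proof.
move=> no_sigma /(contains_insert_atP succ_s_uniq) [sigma_s | [q1 [q2 [q1s q2s iso]]]].
  by rewrite sigma_s in no_sigma.
exists q1, q2; split=> //; apply/allP => z; rewrite mem_cat.
by case/orP => [/(mem_subseq q1s) /mem_take | /(mem_subseq q2s) /mem_drop] /s_le.
Qed.

Lemma insert_avoid123 j : sorted gtn (take j s) ->
  ~~ contains s pat123 -> ~~ contains (insert_at n.+1 j s) pat123.
Proof.
move=> prefix_dec no123; apply/negP => /(contains_insert_max no123).
case=> q1 [q2 [q1s _ iso q_lt]].
have q1_size : size q1 = 2.
  exact: (order_iso_max_index (c := [:: 1; 2]) (e := [::]) iso q_lt).
have q1_dec : sorted gtn q1 := subseq_sorted (rev_trans ltn_trans) q1s prefix_dec.
case: q1 q1_size q1_dec iso {q1s q_lt} => [|a [|b []]] //= _ /andP [ba _].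
by case/order_isoP => _ /(_ 0 1 isT isT) /=; rewrite ltnNge ltnW.
Qed.

Lemma insert_avoidB j : j < k ->
  ~~ contains s (patB k) -> ~~ contains (insert_at n.+1 j s) (patB k).
Proof.
move=> j_lt noB; apply/negP => /(contains_insert_max noB) [q1 [q2 [q1s _ iso q_lt]]].
have q1_size : size q1 = k.
  rewrite (order_iso_max_index (e := [::]) iso q_lt) ?size_rev ?size_iota //.
  by rewrite cats0 all_gtn_rev_iota.
have := size_subseq q1s; rewrite q1_size size_take_min leq_min leqNgt j_lt.
by [].
Qed.

Lemma insert_avoidA j : j <= n -> (j < k.-1) || (j == k.-1) && (head 0 s == size s) ->
  ~~ contains s (patA k) -> ~~ contains (insert_at n.+1 j s) (patA k).
Proof.
move=> jn j_ok noA; apply/negP => /(contains_insert_max noA) [q1 [q2 [q1s q2s iso q_lt]]].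
have j_le : j <= k.-1 by case/orP: j_ok => [/ltnW | /andP [/eqP ->]].
have take_size : size (take j s) = j by rewrite size_takel ?s_size.
have q1_size : size q1 = k.-1.
  by rewrite (order_iso_max_index iso q_lt (patA_max k)) size_rev size_iota.
have j_eq : j = k.-1.
  by apply/eqP; rewrite eqn_leq j_le -q1_size -take_size size_subseq.
have q1_eq : q1 = take j s.
  by apply/eqP; rewrite -(size_subseq_leqif q1s).2 q1_size take_size j_eq.
have head_s : head 0 s = n by move: j_ok; rewrite j_eq ltnn eqxx s_size => /eqP.
have /order_isoP [sz _] := iso.
have q2_size : size q2 = 1.
  by move: sz; rewrite /patA !size_cat size_rev size_iota q1_size => /addnI [].
case: q2 q2s q2_size {q_lt sz} iso => [|z []] // q2s _.
move=> /(order_iso_patA_head (ltnW k_gt2)).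
rewrite q1_eq -nth0 nth_take ?nth0 ?head_s ?j_eq ?k_pred_gt0 // ltnNge.
by rewrite s_le // (mem_drop (n0 := j)) // (mem_subseq q2s) ?mem_head.
Qed.

Lemma inC_insert_at j : j <= n ->
  inC k (insert_at n.+1 j s) = inC k s && (j < label k s).
Proof.
move=> jn; rewrite -active_siteE ?s_size ?(ltnW k_gt2) //.
apply/idP/andP => [ins_C | [s_C /andP [prefix_dec j_ok]]].
  split; last exact: active_site_of_insert.
  exact: avoids_all_subseq (subseq_insert_at _ _ _) ins_C.
move: s_C; rewrite /inC /avoids_all /= !andbT => /and3P [no123 noA noB].
have j_lt : j < k.
  have j_le : j <= k.-1 by case/orP: j_ok => [/ltnW | /andP [/eqP ->]].
  by rewrite (leq_ltn_trans j_le) // ltn_predL (leq_trans _ k_gt2).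
by rewrite insert_avoid123 ?insert_avoidA ?insert_avoidB.
Qed.

Let head_le : head 0 s <= n.
Proof. by case: s s_le => [|x t] //= t_le; apply: t_le; rewrite mem_head. Qed.

Lemma label_insert_at0 : label k (insert_at n.+1 0 s) = minn (label k s).+1 k.
Proof.
rewrite /insert_at take0 drop0 {1}/label desc_run_cons //= s_size eqxx /label.
by case: ltnP => run1; case: ltnP => run2; case: (head 0 s == size s); lia.
Qed.

Lemma label_insert_at j : 0 < j < label k s ->
  label k (insert_at n.+1 j s) = minn j.+1 k.-1.
Proof.
case/andP=> j_gt0 j_lt.
have j_run : j <= desc_run s by rewrite -ltnS (leq_trans j_lt) ?label_le_desc_run.
have js : j <= size s := leq_trans j_run (desc_run_le_size s).
have head_ins : head 0 (insert_at n.+1 j s) = head 0 s.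
  by rewrite -!nth0 /insert_at nth_cat size_takel // j_gt0 nth_take.
have size_ins : size (insert_at n.+1 j s) = n.+1.
  by rewrite (perm_size (perm_insert_at _ _ _)) /= s_size.
rewrite /label desc_run_insert_at ?j_gt0 // head_ins size_ins.
rewrite (_ : (head 0 s == n.+1) = false); last first.
  by apply/negbTE; rewrite neq_ltn ltnS head_le.
have := label_le k s; case: ifP => j_k _; lia.
Qed.
End InsertMax.

(** * The generating tree *)

Lemma map_minn_succ_iota k m : m.+2 <= k ->
  [seq minn j.+1 k.-1 | j <- iota 1 m] = iota 2 m.
Proof.
move=> mk; rewrite -(map_succ_iota 1); apply/eq_in_map => j.
rewrite mem_iota add1n ltnS => /andP [_ jm]; apply/minn_idPl.
by rewrite -ltnS prednK ?(leq_trans _ mk) // !ltnS.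
Qed.

Lemma perm_children k h : 2 < k -> 0 < h <= k ->
  perm_eq (minn h.+1 k :: [seq minn j.+1 k.-1 | j <- iota 1 h.-1]) (children k h).
Proof.
move=> k_gt2 /andP [h_gt0 h_le]; rewrite /children.
case: eqP => [-> | h_ne1]; first by rewrite /= (minn_idPl (ltnW k_gt2)).
case: ltnP => [h_lt | h_ge].
  rewrite (minn_idPl h_lt) map_minn_succ_iota ?prednK //.
  rewrite -[in iota 2 h](prednK h_gt0) iota_rcons add2n prednK //.
  by rewrite perm_sym perm_rcons perm_refl.
have -> : h = k by apply/eqP; rewrite eqn_leq h_le.
case: k k_gt2 {h_gt0 h_le h_ne1 h_ge} => [|[|[|m]]] // _.
rewrite eqxx (minn_idPr (leqnSn _)) [in iota _ _]succnK iota_rcons map_rcons.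
rewrite (map_minn_succ_iota (k := m.+3)) // add1n (minn_idPr (leq_pred _)).
by rewrite (_ : m.+3 - 2 = m.+1) // -cat_rcons cats1 perm_sym perm_rcons perm_refl.
Qed.

Lemma perm_labels_insert_at k n s : 2 < k -> is_perm_n n s ->
  perm_eq [seq label k (insert_at n.+1 j s) | j <- iota 0 (label k s)]
          (children k (label k s)).
Proof.
move=> k_gt2 s_perm; have L_gt0 := label_gt0 s (ltnW k_gt2).
rewrite -[in iota _ _](prednK L_gt0) /= label_insert_at0 //.
have -> : [seq label k (insert_at n.+1 j s) | j <- iota 1 (label k s).-1] =
          [seq minn j.+1 k.-1 | j <- iota 1 (label k s).-1].
  apply/eq_in_map => j; rewrite mem_iota add1n prednK // => j_range.
  exact: label_insert_at.
by apply: perm_children; rewrite // L_gt0 label_le.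
Qed.

Lemma perm_flatten_map (S T : eqType) (f g : S -> seq T) s :
  {in s, forall x, perm_eq (f x) (g x)} ->
  perm_eq (flatten (map f s)) (flatten (map g s)).
Proof.
elim: s => [|x s IH] //= fg; apply: perm_cat; first by apply: fg; rewrite mem_head.
by apply: IH => y ys; apply: fg; rewrite inE ys orbT.
Qed.

Definition Cperms k n := [seq p <- permutations (iota 1 n) | inC k p].

Lemma mem_Cperms k n p : (p \in Cperms k n) = is_perm_n n p && inC k p.
Proof. by rewrite mem_filter mem_permutations andbC. Qed.

Lemma perm_Cperms_succ k n : 2 < k ->
  perm_eq (Cperms k n.+1)
          [seq insert_at n.+1 j s | s <- Cperms k n, j <- iota 0 (label k s)].
Proof.
move=> k_gt2.
have site_le s j : j \in iota 0 (label k s) -> j <= size s.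
  rewrite mem_iota => /andP [_ j_lt].
  by rewrite -ltnS (leq_trans j_lt) ?label_le_succ_size.
have succ_notin s : s \in Cperms k n -> n.+1 \notin s.
  by rewrite mem_Cperms => /andP [/mem_is_perm_n -> _]; rewrite ltnn andbF.
apply: uniq_perm.
- exact: filter_uniq (permutations_uniq _).
- apply: allpairs_uniq_dep => [|s _|];
    rewrite ?filter_uniq ?permutations_uniq ?iota_uniq //.
  move=> [s1 j1] [s2 j2] /allpairsPdep [s1' [j1' [s1C j1L [-> ->]]]].
  move=> /allpairsPdep [s2' [j2' [s2C j2L [-> ->]]]] /= ins_eq.
  have [] := insert_at_inj (succ_notin _ s1C) (succ_notin _ s2C) (site_le _ _ j1L)
                           (site_le _ _ j2L) ins_eq.
  by move=> -> ->.
move=> p; rewrite mem_Cperms; apply/andP/allpairsPdep => [[p_perm p_C] | ].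
- have p_max := max_is_perm_n p_perm.
  have s_perm := is_perm_n_rem p_perm.
  move: p_C; rewrite -(insert_at_index_rem p_max) inC_insert_at ?index_max_is_perm_n //.
  case/andP=> s_C j_lt.
  exists (rem n.+1 p), (index n.+1 p); split.
  + by rewrite mem_Cperms s_perm.
  + by rewrite mem_iota.
  + by rewrite insert_at_index_rem.
- case=> s [j [sC jL ->]]; move: sC; rewrite mem_Cperms => /andP [s_perm s_C].
  have j_le : j <= n by rewrite -(is_perm_n_size s_perm) site_le.
  rewrite is_perm_n_insert_at // inC_insert_at // s_C.
  by move: jL; rewrite mem_iota.
Qed.

Lemma perm_labels_level k n : 2 < k ->
  perm_eq (map (label k) (Cperms k n)) (level k n).
Proof.
move=> k_gt2; elim: n => [|n IH].
  rewrite /Cperms /= /inC avoids_all_nil /=; last first.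
    by rewrite !inE /patA /patB; case: (rev (iota 1 k.-1)); case: (rev (iota 1 k)).
  by case: k k_gt2 => [|[|[|m]]].
apply: perm_trans (perm_map (label k) (perm_Cperms_succ n k_gt2)) _.
rewrite map_allpairs /=; apply: perm_trans (perm_flatten (perm_map (children k) IH)).
rewrite -map_comp; apply: perm_flatten_map => s; rewrite mem_Cperms => /andP [s_perm _].
exact: perm_labels_insert_at.
Qed.

Lemma index_max_Cperm k n p : 2 < k -> is_perm_n n.+1 p -> inC k p ->
  index n.+1 p < k.
Proof.
move=> k_gt2 p_perm.
rewrite -{1}(insert_at_index_rem (max_is_perm_n p_perm)).
rewrite inC_insert_at ?is_perm_n_rem ?index_max_is_perm_n //.
by case/andP=> _ /leq_trans; apply; apply: label_le.
Qed.

Lemma countC_tree_count k n : 2 < k -> countC k n = tree_count k n.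
Proof.
move=> k_gt2; rewrite /countC -size_filter /tree_count.
by rewrite -(perm_size (perm_labels_level n k_gt2)) size_map.
Qed.

Theorem mainTheorem7 (k : nat) (hk : 3 <= k) :
  (forall (n : nat) (p : seq nat) (l : nat),
      1 <= n -> is_perm_n n p -> inC k p ->
      1 <= l <= n -> nth 0 p l.-1 = n -> l <= k) /\
  (forall n : nat, countC k n = tree_count k n).
Proof.
split=> [[|n] // p l _ p_perm p_C /andP [l_gt0 l_le] p_l | n]; last first.
  exact: countC_tree_count.
have l_index : index n.+1 p = l.-1.
  rewrite -p_l index_uniq ?(is_perm_n_uniq p_perm) // (is_perm_n_size p_perm).
  by rewrite prednK.
by rewrite -(prednK l_gt0) -l_index index_max_Cperm.
Qed.
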